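(* Let $n\ge1$ and $I,J\subseteq[n-1]$. Then (a) $M_{\mathrm{comp}(I)}=\sum_{J\subseteq[n-1]:\,I\cup J=[n-1]}(-\nu)^{|J\setminus I|}(\nu-1)^{|I\cap J|}\Pi(\nu)_{\mathrm{comp}(J)}$; (b) $\Pi(\nu)_{\mathrm{comp}(J)}=\left(\frac{1}{1-\nu}\right)^{|J|}\sum_{I\subseteq[n-1]:\,I\cap J=\emptyset}\left(\frac{\nu-1}{\nu}\right)^{(n-1)-|I|}M_{\mathrm{comp}(I)}$.
   Context: Fix an integer $\nu>1$; $C_\nu$ is the additive cyclic group of order $\nu$; $Q_n(\nu)=\bigoplus_{i\in[n-1]}C_\nu$. $\psi_\nu(0)=1$, $\psi_\nu(g)=-1/(\nu-1)$ for $g\ne0$. For $I\subseteq[n-1]$, $\dot\chi^I(\nu)(\mathbf g)=\prod_{i\in[n-1]\setminus I}\psi_\nu(g_i)$, and $\kappa_I(\nu)$ is the indicator function of $\{\mathbf g:\{i:g_i\ne0\}=I\}$. $\mathrm{scf}(\mathcal N_n(\nu))$ is the span of the $\kappa_I(\nu)$ (also spanned by the $\dot\chi^I(\nu)$). $\mathrm{comp}(\{s_1<\dots<s_i\})=(s_1,s_2-s_1,\dots,n-s_i)$; $M_\alpha$ are the monomial quasisymmetric functions and $L_{\mathrm{comp}(I)}=\sum_{I\subseteq J\subseteq[n-1]}M_{\mathrm{comp}(J)}$. $\mathrm{ch}^n_\nu:\mathrm{scf}(\mathcal N_n(\nu))\to\mathsf{QSym}_n$ is the linear map $\dot\chi^I(\nu)\mapsto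 L_{\mathrm{comp}(I)}$, and $\Pi(\nu)_{\mathrm{comp}(I)}:=\mathrm{ch}^n_\nu\big(\kappa_I(\nu)/(\nu-1)^{|I|}\big)$. *)

From HB Require Import structures.
From mathcomp Require Import all_boot all_order all_algebra.
From mathcomp Require Import mpoly.
From Stdlib Require Import ClassicalEpsilon.



Unset Printing Implicit Defensive.

Import Order.TTheory GRing.Theory Num.Theory.
Local Open Scope ring_scope.

(* Index set [n-1] = {1,...,n-1} is modelled by 'I_(n.-1): ordinal i stands
   for the integer i+1.  C_nu is modelled by 'I_nu (only the test g == 0 is
   used); Q_n(nu) = (C_nu)^[n-1] is {ffun 'I_(n.-1) -> 'I_nu}). *)
Notation Qn nu n := ({ffun 'I_(n.-1) -> 'I_nu}).

Section Defs.
Variable R : numFieldType.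

Definition psi (nu : nat) (g : 'I_nu) : R :=
  if val g == 0%N then 1 else - (nu%:R - 1)^-1.

Definition chidot (nu n : nat) (I : {set 'I_(n.-1)}) : {ffun Qn nu n -> R} :=
  [ffun g : Qn nu n => \prod_(i in ~: I) psi nu (g i)].

Definition kappa (nu n : nat) (I : {set 'I_(n.-1)}) : {ffun Qn nu n -> R} :=
  [ffun g : Qn nu n => ([set i | val (g i) != 0%N] == I)%:R].

(* comp({s_1<...<s_i}) = (s_1, s_2-s_1, ..., n-s_i) *)
Definition compos (n : nat) (I : {set 'I_(n.-1)}) : seq nat :=
  pairmap (fun a b => b - a)%N 0%N
    (rcons [seq (val i).+1 | i <- enum I] n).

(* Monomial quasisymmetric function M_alpha, realised in the n variables
   x_0,...,x_{n-1}:  sum over i_1 < ... < i_k of x_{i_1}^{a_1}...x_{i_k}^{a_k}. *)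
Definition Mqs (n : nat) (alpha : seq nat) : {mpoly R[n]} :=
  \sum_(f : {ffun 'I_(size alpha) -> 'I_n} |
          [forall i : 'I_(size alpha), forall j : 'I_(size alpha), (val i < val j)%N ==> (val (f i) < val (f j))%N])
    \prod_(j < size alpha) 'X_(f j) ^+ nth 0%N alpha j.

Definition Lqs (n : nat) (I : {set 'I_(n.-1)}) : {mpoly R[n]} :=
  \sum_(J : {set 'I_(n.-1)} | I \subset J) Mqs n (compos n J).

(* ch^n_nu : scf(N_n(nu)) -> QSym_n, the linear map chidot^I |-> L_comp(I):
   ch f = sum_I a_I L_comp(I), where (a_I) are the (unique) coefficients with
   f = sum_I a_I chidot^I. *)
Definition chcoef (nu n : nat) (f : {ffun Qn nu n -> R}) :
  {set 'I_(n.-1)} -> R :=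
  epsilon (inhabits (fun _ => 0))
    (fun a : {set 'I_(n.-1)} -> R =>
       forall g : Qn nu n, f g = \sum_(J : {set 'I_(n.-1)}) a J * chidot nu n J g).

Definition ch (nu n : nat) (f : {ffun Qn nu n -> R}) : {mpoly R[n]} :=
  \sum_(I : {set 'I_(n.-1)}) chcoef nu n f I *: Lqs n I.

Definition Pi (nu n : nat) (J : {set 'I_(n.-1)}) : {mpoly R[n]} :=
  ch nu n [ffun g : Qn nu n => (nu%:R - 1) ^- #|J| * kappa nu n J g].

End Defs.

(* Everything in sight factors over the coordinates of [n-1]: chidot^K,
   kappa_J, the inclusion matrix expressing L in terms of M, and the
   coefficients in (a) and (b) are products over i of a 2x2 table indexed by
   (i \in A, i \in B).  A sum over subsets of such products is the product of
   the coordinatewise sums, so these kernels compose like their 2x2 tables.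
   At the points with coordinates in {0, 1} the table of chidot is invertible;
   this identifies the coefficients defining ch, gives
   Pi_J = sum_L (prod_i pi_coef (i \in J) (i \in L)) M_L, and reduces (a) and
   (b) to identities between 2x2 tables. *)

From mathcomp Require Import all_boot all_order all_algebra.
From mathcomp Require Import mpoly.
From mathcomp Require Import ring.
From Stdlib Require Import ClassicalEpsilon.
Import GRing.Theory Num.Theory.
Local Open Scope ring_scope.

Section SubsetProducts.
Variables (R : comPzSemiRingType) (T : finType).

Lemma sum_set_prod (F : T -> bool -> R) :
  \sum_(S : {set T}) \prod_i F i (i \in S) = \prod_i (F i true + F i false).
Proof.
transitivity (\prod_i \sum_(b : bool) F i b).
  rewrite bigA_distr_bigA (reindex (fun f : {ffun T -> bool} => [set i | f i])) /=.
    by apply: eq_bigr => f _; apply: eq_bigr => i _; rewrite inE.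
  exists (fun S : {set T} => [ffun i => i \in S]) => [f _ | S _].
    by apply/ffunP => i; rewrite ffunE inE.
  by apply/setP => i; rewrite inE ffunE.
by apply: eq_bigr => i _; rewrite big_bool.
Qed.

Lemma natr_forall (P : pred T) : ([forall i, P i]%:R : R) = \prod_i (P i)%:R.
Proof.
have [/forallP allP | /forallPn [i nPi]] := boolP [forall i, P i].
  by rewrite big1 // => i _; rewrite allP.
by rewrite (bigD1 i) //= (negbTE nPi) mul0r.
Qed.

Definition setkern (w : bool -> bool -> R) (A B : {set T}) : R :=
  \prod_i w (i \in A) (i \in B).

Lemma natr_eqset (A B : {set T}) :
  ((A == B)%:R : R) = setkern (fun a b => (a == b)%:R) A B.
Proof.
rewrite /setkern -natr_forall; congr (nat_of_bool _)%:R.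
apply/idP/forallP => [/eqP -> i | eqAB] //.
by apply/eqP/setP => i; apply/eqP.
Qed.

Lemma natr_subset (A B : {set T}) :
  ((A \subset B)%:R : R) = setkern (fun a b => (a ==> b)%:R) A B.
Proof.
rewrite /setkern -natr_forall; congr (nat_of_bool _)%:R.
by apply/subsetP/forallP => sAB i; [apply/implyP; apply: sAB | apply/implyP/sAB].
Qed.

Lemma expr_card_prod (A : {set T}) (x : R) :
  x ^+ #|A| = \prod_i (if i \in A then x else 1).
Proof. by rewrite -big_mkcond /= prodr_const. Qed.

Lemma setkernM (u v w : bool -> bool -> R) (A C : {set T}) :
  (forall a c, u a true * v true c + u a false * v false c = w a c) ->
  \sum_B setkern u A B * setkern v B C = setkern w A C.
Proof.
move=> uvw; under eq_bigr do rewrite -big_split /=.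
rewrite (sum_set_prod (fun i b => u (i \in A) b * v b (i \in C))).
by apply: eq_bigr => i _; rewrite uvw.
Qed.

End SubsetProducts.

Arguments setkern {R T} w A B.
Arguments sum_set_prod {R T} F.

Lemma sum_natr_eq_scale {R : pzRingType} {V : lmodType R} {I : finType}
    (i : I) (X : I -> V) :
  \sum_j (i == j)%:R *: X j = X i.
Proof.
rewrite (bigD1 i) //= eqxx scale1r big1 ?addr0 // => j.
by rewrite eq_sym => /negbTE ->; rewrite scale0r.
Qed.

Lemma sum_scale_exchange (R : pzRingType) (V : lmodType R) (I J : finType)
    (P : pred I) (c : I -> R) (d : I -> J -> R) (X : J -> V) :
  \sum_(i | P i) c i *: \sum_j d i j *: X j =
  \sum_j (\sum_(i | P i) c i * d i j) *: X j.
Proof.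
under eq_bigr do rewrite scaler_sumr.
rewrite exchange_big; apply: eq_bigr => j _; rewrite scaler_suml.
by apply: eq_bigr => i _; rewrite scalerA.
Qed.

Section Fundamental.
Variables (R : numFieldType) (n : nat).

Local Notation M L := (Mqs R n (compos n L)).

Lemma LqsE K : Lqs R n K = \sum_(L : {set _}) (K \subset L)%:R *: M L.
Proof.
rewrite /Lqs big_mkcond; apply: eq_bigr => L _.
by rewrite scaler_nat mulrb.
Qed.

Lemma sum_Lqs (c : {set 'I_(n.-1)} -> R) :
  \sum_K c K *: Lqs R n K = \sum_(L : {set _}) (\sum_K c K * (K \subset L)%:R) *: M L.
Proof. by under eq_bigr do rewrite LqsE; rewrite sum_scale_exchange. Qed.

End Fundamental.

Section Characteristic.
Variables (R : numFieldType) (nu n : nat).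
Hypothesis nu_gt1 : (1 < nu)%N.

Local Notation N := (nu%:R : R).
Local Notation M L := (Mqs R n (compos n L)).
Local Notation chidot := (chidot R nu n).

Lemma nu_neq0 : N != 0.
Proof. by rewrite pnatr_eq0 -lt0n ltnW. Qed.

Lemma nu_sub1_neq0 : N - 1 != 0.
Proof. by rewrite subr_eq0 pnatr_eq1 gtn_eqF. Qed.

Lemma sub1_nu_neq0 : 1 - N != 0.
Proof. by rewrite -opprB oppr_eq0 nu_sub1_neq0. Qed.

Ltac coord_field := field; by rewrite ?nu_neq0 ?nu_sub1_neq0 ?sub1_nu_neq0.

Lemma chidot_prod K (g : Qn nu n) :
  chidot K g = \prod_i (if i \in K then 1 else psi R nu (g i)).
Proof.
rewrite ffunE big_mkcond; apply: eq_bigr => i _.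
by rewrite inE; case: (i \in K).
Qed.

Definition testpt (S : {set 'I_(n.-1)}) : Qn nu n :=
  [ffun i => if i \in S then Ordinal nu_gt1 else Ordinal (ltnW nu_gt1)].

(* The inverse of the table [s, j |-> if j || ~~ s then 1 else -1/(N-1)]
   describing chidot at the points [testpt S] (see [chidot_testpt]). *)
Definition chidot_dual (k s : bool) : R :=
  if k then (if s then (N - 1) / N else N^-1)
  else (if s then - (N - 1) / N else (N - 1) / N).

Definition chidot_coord (K : {set 'I_(n.-1)}) (f : {ffun Qn nu n -> R}) : R :=
  \sum_S setkern chidot_dual K S * f (testpt S).

Lemma chidot_testpt J S :
  chidot J (testpt S) = setkern (fun s j => if j || ~~ s then 1 else - (N - 1)^-1) S J.
Proof.
rewrite chidot_prod; apply: eq_bigr => i _.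
by rewrite ffunE /psi; case: (i \in S); case: (i \in J).
Qed.

Lemma chidot_coord_chidot K J : chidot_coord K (chidot J) = (K == J)%:R.
Proof.
rewrite /chidot_coord; under eq_bigr do rewrite chidot_testpt; rewrite natr_eqset.
by apply: setkernM => k j; case: k; case: j => /=; coord_field.
Qed.

Lemma chidot_coord_sum K {a : {set 'I_(n.-1)} -> R} {f : {ffun Qn nu n -> R}} :
  (forall g, f g = \sum_J a J * chidot J g) -> chidot_coord K f = a K.
Proof.
move=> fE; rewrite /chidot_coord; under eq_bigr do rewrite fE big_distrr.
rewrite exchange_big /= -[RHS](@sum_natr_eq_scale _ R^o _ K).
apply: eq_bigr => J _; rewrite -chidot_coord_chidot /chidot_coord scaler_suml.
by apply: eq_bigr => S _; rewrite mulrCA mulrC.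
Qed.

Lemma chE (a : {set 'I_(n.-1)} -> R) (f : {ffun Qn nu n -> R}) :
  (forall g, f g = \sum_J a J * chidot J g) -> ch R nu n f = \sum_J a J *: Lqs R n J.
Proof.
move=> fE.
have chcoefE : forall g, f g = \sum_J chcoef R nu n f J * chidot J g.
  exact: (epsilon_spec _ (fun b => forall g, f g = \sum_J b J * chidot J g)
            (ex_intro _ a fE)).
apply: eq_bigr => J _.
by rewrite -(chidot_coord_sum J chcoefE) (chidot_coord_sum J fE).
Qed.

Definition kappa_coef (j k : bool) : R :=
  if k then N^-1 else if j then - N^-1 else (N - 1) / N.

Lemma kappa_chidot (J : {set 'I_(n.-1)}) (g : Qn nu n) :
  (N - 1) ^- #|J| * kappa R nu n J g = \sum_K setkern kappa_coef J K * chidot K g.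
Proof.
under eq_bigr do rewrite chidot_prod -big_split /=.
rewrite (sum_set_prod
  (fun i k => kappa_coef (i \in J) k * (if k then 1 else psi R nu (g i)))).
rewrite -exprVn expr_card_prod ffunE natr_eqset -big_split; apply: eq_bigr => i _.
rewrite inE /psi; case: (i \in J); case: (val (g i) == 0%N) => /=; coord_field.
Qed.

Definition pi_coef (j l : bool) : R :=
  if j then (if l then 0 else - N^-1) else (if l then 1 else (N - 1) / N).

Lemma PiE J : Pi R nu n J = \sum_(L : {set _}) setkern pi_coef J L *: M L.
Proof.
rewrite /Pi (chE (setkern kappa_coef J)) => [|g]; last by rewrite ffunE kappa_chidot.
rewrite sum_Lqs; apply: eq_bigr => L _; congr (_ *: _).
under eq_bigr do rewrite natr_subset.
by apply: setkernM => j l; case: j; case: l => /=; coord_field.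
Qed.

Definition cover_coef (i j : bool) : R :=
  if j then (if i then N - 1 else - N) else i%:R.

Lemma setkern_cover_coef (I J : {set 'I_(n.-1)}) :
  setkern cover_coef I J =
  (I :|: J == setT)%:R * ((- N) ^+ #|J :\: I| * (N - 1) ^+ #|I :&: J|).
Proof.
rewrite natr_eqset !expr_card_prod /setkern -!big_split; apply: eq_bigr => i _.
by rewrite !inE; case: (i \in I); case: (i \in J) => /=; ring.
Qed.

Lemma setkern_pi_coef (J L : {set 'I_(n.-1)}) :
  setkern pi_coef J L =
  (1 / (1 - N)) ^+ #|J| * (L :&: J == set0)%:R * ((N - 1) / N) ^+ (n.-1 - #|L|).
Proof.
have -> : (n.-1 - #|L| = #|~: L|)%N by rewrite [#|~: L|]cardsCs setCK card_ord.
rewrite natr_eqset !expr_card_prod /setkern -!big_split; apply: eq_bigr => i _.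
by rewrite !inE; case: (i \in J); case: (i \in L) => /=; coord_field.
Qed.

Lemma Mqs_Pi (I : {set 'I_(n.-1)}) :
  M I = \sum_(J | I :|: J == setT)
          ((- N) ^+ #|J :\: I| * (N - 1) ^+ #|I :&: J|) *: Pi R nu n J.
Proof.
under eq_bigr do rewrite PiE.
rewrite sum_scale_exchange.
rewrite -[LHS](sum_natr_eq_scale I (fun L => M L)).
apply: eq_bigr => L _; congr (_ *: _).
rewrite big_mkcond natr_eqset /=.
under eq_bigr do rewrite -mulrb -[_ *+ (_ == _)]mulr_natl mulrA -setkern_cover_coef.
by symmetry; apply: setkernM => i l; case: i; case: l => /=; coord_field.
Qed.

Lemma Pi_Mqs (J : {set 'I_(n.-1)}) :
  Pi R nu n J =
  (1 / (1 - N)) ^+ #|J| *: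
    \sum_(I | I :&: J == set0) ((N - 1) / N) ^+ (n.-1 - #|I|) *: M I.
Proof.
rewrite PiE scaler_sumr [RHS]big_mkcond; apply: eq_bigr => L _ /=.
rewrite setkern_pi_coef; case: (L :&: J == set0).
  by rewrite mulr1 scalerA.
by rewrite mulr0 mul0r scale0r.
Qed.

End Characteristic.

Theorem lemma4p4 (R : numFieldType) (nu n : nat) :
  (1 < nu)%N -> (1 <= n)%N ->
  (forall I : {set 'I_(n.-1)},
     Mqs R n (compos n I) =
     \sum_(J : {set 'I_(n.-1)} | I :|: J == setT)
        ((- (nu%:R : R)) ^+ #|J :\: I| * ((nu%:R : R) - 1) ^+ #|I :&: J|)
          *: Pi R nu n J)
  /\
  (forall J : {set 'I_(n.-1)},
     Pi R nu n J =
     (1 / (1 - (nu%:R : R))) ^+ #|J| *: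
       \sum_(I : {set 'I_(n.-1)} | I :&: J == set0)
          (((nu%:R : R) - 1) / nu%:R) ^+ (n.-1 - #|I|) *: Mqs R n (compos n I)).
Proof.
move=> nu_gt1 _.
by split; [exact: Mqs_Pi | exact: Pi_Mqs].
Qed.
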